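(* Let $X$ be a quasi-Banach function space over $\mathbf{R}^d$ with the Fatou property and let $T$ be a non-degenerate (sub)linear operator for which $T:X\to X_{\mathrm{weak}}$ is bounded. Then $X\in A$ with \[[X]_A\le C^{-2}\|T\|_{X\to X_{\mathrm{weak}}}^2,\] where $C$ is the constant in the definition of non-degeneracy.
   Context: Cubes are axis-parallel cubes in $\mathbf{R}^d$. A quasi-Banach function space over $\mathbf{R}^d$ is a complete quasi-normed space $X\subseteq L^0(\mathbf{R}^d)$ with the ideal property (if $f\in X$, $|g|\le|f|$ then $g\in X$, $\|g\|_X\le\|f\|_X$) and the saturation property (every set of positive measure contains a subset $F$ of positive measure with $\mathbf{1}_F\in X$). Köthe dual: $\|g\|_{X'}=\sup_{\|f\|_X=1}\int|fg|$. Fatou property: $0\le f_n\uparrow f$ a.e., $\sup\|f_n\|_X<\infty$ imply $f\in X$, $\|f\|_X=\sup\|f_n\|_X$. $X_{\mathrm{weak}}$: $f$ with $\mathbf{1}_{\{|f|>\lambda\}}\in X$ for all $\lambda>0$, $\|f\|_{X_{\mathrm{weak}}}=\sup_\lambda\lambda\|\mathbf{1}_{\{|f|>\lambda\}}\|_X<\infty$. $X\in A$: $\mathbf{1}_Q\in X$ and $\mathbf{1}_Q\in X'$ for all cubes $Q$ and $[X]_A=\sup_Q|Q|^{-1}\|\mathbf{1}_Q\|_X\|\mathbf{1}_Q\|_{X'}<\infty$. An operator $T$ is non-degenerate if there is $C>0$ such that for every $\ell>0$ there is $x_\ell\in\mathbf{R}^d$ such that for all cubes $Q$ of side length $\ell$,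 all $0\le f\in L^1(Q)$ and all $x\in(Q+x_\ell)\cup(Q-x_\ell)$: $|Tf(x)|\ge C\frac1{|Q|}\int_Qf$. *)

From HB Require Import structures.
From mathcomp Require Import all_boot all_order all_algebra.
From mathcomp Require Import all_classical all_reals all_analysis.

Set Implicit Arguments.
Unset Strict Implicit.
Unset Printing Implicit Defensive.
Import Order.TTheory GRing.Theory Num.Theory.
Import numFieldNormedType.Exports.
Local Open Scope classical_set_scope.
Local Open Scope ring_scope.

(* Lebesgue measure on R^d = 'rV[R]_d, built by the textbook Caratheodory    *)
(* construction: the outer measure lambda^*(A) = inf sum_k vol(B_k) over     *)
(* countable covers of A by half-open boxes B_k = prod_i [a_i, b_i), and the *)
(* Lebesgue sigma-algebra = Caratheodory-measurable sets of lambda^*.        *)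

Section LebesgueRd.
Variables (R : realType) (d : nat).

Definition hbox (a b : 'rV[R]_d) : set 'rV[R]_d :=
  [set x | forall i : 'I_d, a 0 i <= x 0 i < b 0 i].

(* auxiliary copy of R^d in which every set is "measurable", used only to  *)
(* feed the generic outer-measure construction mu_ext (inf over covers)    *)
Definition Rd_all := 'rV[R]_d.
HB.instance Definition _ := Pointed.on Rd_all.
HB.instance Definition _ := @isMeasurable.Build default_measure_display Rd_all
  setT I (fun _ _ => I) (fun _ _ => I).

(* volume of a set that is a box (with a <= b); +oo for non-boxes, 0 for set0 *)
Definition box_content (A : set Rd_all) : \bar R :=
  if asbool (A = set0) then 0%E
  else ereal_inf [set (\prod_(i < d) (ab.2 0 i - ab.1 0 i))%:E
                 | ab in [set ab : 'rV[R]_d * 'rV[R]_d |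
                     (forall i, ab.1 0 i <= ab.2 0 i) /\ A = hbox ab.1 ab.2]].

Lemma box_content0 : box_content (set0 : set Rd_all) = 0%E.
Proof. by rewrite /box_content asboolT. Qed.

Lemma box_content_ge0 (A : set Rd_all) : (0 <= box_content A)%E.
Proof.
rewrite /box_content; case: asboolP => // _.
apply: le_ereal_inf_tmp => _ [[a b] [ab _] <-].
rewrite lee_fin; apply: prodr_ge0 => i _; by rewrite subr_ge0.
Qed.

Definition lebesgue_outer : set Rd_all -> \bar R := mu_ext box_content.

HB.instance Definition _ := isOuterMeasure.Build R Rd_all lebesgue_outer
  (mu_ext0 box_content0 box_content_ge0) (mu_ext_ge0 box_content_ge0)
  (le_mu_ext box_content) (mu_ext_sigma_subadditive box_content_ge0).

Definition lebesgue_outer_measure : {outer_measure set Rd_all -> \bar R} :=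
  lebesgue_outer.

Definition Rd := caratheodory_type lebesgue_outer_measure.

Definition lebesgue_Rd : {measure set Rd -> \bar R} :=
  (lebesgue_outer_measure : set Rd -> \bar R).

End LebesgueRd.

Section FunctionSpaces.
Local Open Scope ereal_scope.
Variables (R : realType) (d : nat).
Local Notation Rd := (Rd R d).
Local Notation lebesgue_Rd := (lebesgue_Rd R d).

Definition cube (a : 'rV[R]_d) (l : R) : set Rd :=
  [set x : Rd | forall i : 'I_d, (a 0 i <= (x : 'rV[R]_d) 0 i < a 0 i + l)%R].

Definition cube_vol (l : R) : R := (l ^+ d)%R.

Definition translate_set (Q : set Rd) (z : 'rV[R]_d) : set Rd :=
  [set x : Rd | Q ((x : 'rV[R]_d) - z)%R].

(* X is given by its elements inX (functions, i.e. representatives of      *)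
(* elements of L^0) and its quasi-norm nX (only meaningful on inX).        *)
Record quasi_banach_function_space (inX : set (Rd -> R))
    (nX : (Rd -> R) -> R) : Prop := QBFS {
  qbfs_measurable : forall f, inX f -> measurable_fun setT f ;
  qbfs_zero : inX (fun=> 0%R) ;
  qbfs_add : forall f g, inX f -> inX g -> inX (f \+ g)%R%R ;
  qbfs_scale : forall (c : R) f, inX f -> inX (fun x => c * f x)%R ;
  qbfs_ge0 : forall f, inX f -> (0 <= nX f)%R ;
  qbfs_definite : forall f, inX f ->
    (nX f = 0%R <-> {ae lebesgue_Rd, forall x, f x = 0%R}) ;
  qbfs_homogeneous : forall (c : R) f, inX f ->
    nX (fun x => c * f x)%R = (`|c| * nX f)%R ;
  qbfs_quasi_triangle : exists K : R, (1 <= K)%R /\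
    forall f g, inX f -> inX g -> (nX (f \+ g)%R <= K * (nX f + nX g))%R ;
  qbfs_complete : forall u : nat -> Rd -> R, (forall n, inX (u n)) ->
    (forall e : R, (0 < e)%R -> exists M : nat, forall m n, (M <= m)%N ->
       (M <= n)%N -> (nX (u m \- u n)%R < e)%R) ->
    exists f, inX f /\ nX (u n \- f)%R @[n --> \oo] --> 0%R ;
  qbfs_ideal : forall f g : Rd -> R, inX f -> measurable_fun setT g ->
    {ae lebesgue_Rd, forall x, (`|g x| <= `|f x|)%R} -> inX g /\ (nX g <= nX f)%R ;
  qbfs_saturation : forall E : set Rd, measurable E -> 0 < lebesgue_Rd E ->
    exists F : set Rd, [/\ measurable F, F `<=` E, 0 < lebesgue_Rd F & inX (\1_F)]
}.

Definition fatou_property (inX : set (Rd -> R)) (nX : (Rd -> R) -> R) :=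
  forall (u : nat -> Rd -> R) (f : Rd -> R),
    (forall n, inX (u n)) ->
    {ae lebesgue_Rd, forall x, (forall n, 0 <= u n x <= u n.+1 x)%R /\
                       u ^~ x @ \oo --> f x} ->
    (exists M : R, forall n, (nX (u n) <= M)%R) ->
    inX f /\ (nX f)%:E = ereal_sup (range (fun n => (nX (u n))%:E)).

Definition kothe_norm (inX : set (Rd -> R)) (nX : (Rd -> R) -> R)
    (g : Rd -> R) : \bar R :=
  ereal_sup [set \int[lebesgue_Rd]_x (`|f x * g x|)%:E
            | f in [set f | inX f /\ nX f = 1%R]].

Definition in_kothe_dual inX nX (g : Rd -> R) :=
  measurable_fun setT g /\ kothe_norm inX nX g < +oo.

Definition weak_norm (nX : (Rd -> R) -> R) (f : Rd -> R) : \bar R :=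
  ereal_sup [set (lam * nX (\1_[set x | lam < `|f x|]))%:E
            | lam in [set lam : R | (0 < lam)%R]].

Definition in_weak (inX : set (Rd -> R)) nX (f : Rd -> R) :=
  [/\ measurable_fun setT f,
      (forall lam : R, (0 < lam)%R -> inX (\1_[set x | lam < `|f x|]%R)) &
      weak_norm nX f < +oo].

Definition in_A (inX : set (Rd -> R)) nX :=
  forall (a : 'rV[R]_d) (l : R), (0 < l)%R ->
    inX (\1_(cube a l)) /\ in_kothe_dual inX nX (\1_(cube a l)).

Definition A_const (inX : set (Rd -> R)) nX : \bar R :=
  ereal_sup [set ((cube_vol al.2)^-1 * nX (\1_(cube al.1 al.2)))%:E
                 * kothe_norm inX nX (\1_(cube al.1 al.2))
            | al in [set al : 'rV[R]_d * R | (0 < al.2)%R]].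

Definition sublinear_on (inX : set (Rd -> R)) (T : (Rd -> R) -> Rd -> R) :=
  (forall f g, inX f -> inX g -> forall x,
     (`|T (f \+ g)%R x| <= `|T f x| + `|T g x|)%R) /\
  (forall (c : R) f, inX f -> forall x,
     (`|T (fun y => c * f y) x| = `|c| * `|T f x|)%R).

Definition bounded_to_weak (inX : set (Rd -> R)) nX
    (T : (Rd -> R) -> Rd -> R) (N : R) :=
  forall f, inX f -> in_weak inX nX (T f) /\
    weak_norm nX (T f) <= (N * nX f)%:E.

Definition nondegenerate_op (T : (Rd -> R) -> Rd -> R) (C : R) :=
  (0 < C)%R /\
  forall l : R, (0 < l)%R -> exists xl : 'rV[R]_d,
    forall (a : 'rV[R]_d) (f : Rd -> R),
      (forall x, 0 <= f x)%R ->
      (forall x, ~ cube a l x -> f x = 0%R) ->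
      lebesgue_Rd.-integrable (cube a l) (EFin \o f) ->
      forall x, translate_set (cube a l) xl x \/ translate_set (cube a l) (- xl)%R x ->
        (C / cube_vol l)%:E * \int[lebesgue_Rd]_(y in cube a l) (f y)%:E
          <= (`|T f x|)%:E.

End FunctionSpaces.

From HB Require Import structures.
From mathcomp Require Import all_boot all_order all_algebra.
From mathcomp Require Import all_classical all_reals all_analysis.
From mathcomp Require Import measurable_realfun ring.

(* For [0 <= g] supported on a cube [Q] of side [l], non-degeneracy gives
   [|T g| >= C <g>_Q] on the shifted cube [Q + x_l], and [|T 1_(Q + x_l)| >= C]
   on [Q]. Two applications of the weak-type bound yield
   [C^2 <g>_Q ||1_Q||_X <= N^2 ||g||_X]; truncating [|f|] and taking the
   supremum over [||f||_X = 1] gives [||1_Q||_X' <= N^2 |Q| / (C^2 ||1_Q||_X)],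
   i.e. [[X]_A <= N^2 / C^2]. That [1_Q] is in [X] at all comes from
   saturation: some [1_F] with [F] of positive measure inside [Q - x_l] is in
   [X], and [|T 1_F|] is bounded below on [Q], so [1_Q] is dominated by the
   indicator of a level set of [T 1_F].

   Lebesgue measure on [R^d] being defined through countable box covers, one
   also needs that cubes are measurable with measure [l^d]. The lower bound is
   the covering inequality [vol B <= sum_k vol B_k], obtained by integrating
   [1_B <= sum_k 1_(B_k)] one coordinate at a time. *)

Set Implicit Arguments.
Unset Strict Implicit.
Unset Printing Implicit Defensive.
Import Order.TTheory GRing.Theory Num.Theory.
Import numFieldNormedType.Exports.
Local Open Scope classical_set_scope.
Local Open Scope ring_scope.

Section BoxVolume.
Variables (R : realType) (d : nat).
Implicit Types (a b x : 'rV[R]_d) (n : nat).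

Definition box_vol a b : R := \prod_(i < d) (b 0 i - a 0 i).

Definition row_upd (j : 'I_d) x (t : R) : 'rV[R]_d :=
  \row_i (if i == j then t else x 0 i).

(* [partial_vol n a b x] is the integral of the indicator of [hbox a b] over
   the first [n] coordinates, the remaining ones being those of [x]. *)
Definition partial_vol n a b x : R :=
  (\prod_(i < d | (n <= i)%N) \1_(`[a 0 i, b 0 i[%classic) (x 0 i)) *
  \prod_(i < d | (i < n)%N) (b 0 i - a 0 i).

Definition partial_vol_skip n a b x : R :=
  (\prod_(i < d | (n < i)%N) \1_(`[a 0 i, b 0 i[%classic) (x 0 i)) *
  \prod_(i < d | (i < n)%N) (b 0 i - a 0 i).

Lemma partial_vol_row_upd n (j : 'I_d) a b x t : j = n :> nat ->
  partial_vol n a b (row_upd j x t) =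
  \1_(`[a 0 j, b 0 j[%classic) t * partial_vol_skip n a b x.
Proof.
move=> jn; rewrite /partial_vol /partial_vol_skip (bigD1 j) /=; last by rewrite jn.
rewrite !mxE eqxx mulrA; congr (_ * _ * _).
apply: eq_big => i; first by rewrite -jn ltn_neqAle andbC eq_sym.
by move=> /andP[_ /negbTE ij]; rewrite mxE ij.
Qed.

Lemma partial_volS n (j : 'I_d) a b x : j = n :> nat ->
  partial_vol n.+1 a b x = (b 0 j - a 0 j) * partial_vol_skip n a b x.
Proof.
move=> jn; rewrite /partial_vol /partial_vol_skip.
rewrite (bigD1 j (P := fun i : 'I_d => (i < n.+1)%N)) /=; last by rewrite jn.
rewrite mulrCA; congr (_ * (_ * _)).
by apply: eq_bigl => i; rewrite -val_eqE /= -jn ltnS; case: ltngtP.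
Qed.

Lemma partial_vol_ge0 n a b x : (forall i, a 0 i <= b 0 i) ->
  0 <= partial_vol n a b x.
Proof.
by move=> ab; apply: mulr_ge0; apply: prodr_ge0 => // i _; rewrite subr_ge0.
Qed.

Lemma partial_vol_skip_ge0 n a b x : (forall i, a 0 i <= b 0 i) ->
  0 <= partial_vol_skip n a b x.
Proof.
by move=> ab; apply: mulr_ge0; apply: prodr_ge0 => // i _; rewrite subr_ge0.
Qed.

Lemma partial_vol0 a b x : partial_vol 0 a b x = \1_(hbox a b) x.
Proof.
rewrite /partial_vol [X in _ * X]big_pred0 // mulr1.
have [hx|hx] := pselect (hbox a b x).
  rewrite indicE mem_set // big1 // => i _.
  by rewrite indicE mem_set //= in_itv /= hx.
have [i /negP hi] : exists i, ~~ (a 0 i <= x 0 i < b 0 i).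
  apply: contrapT => hn; apply: hx => i; apply: contrapT => hi.
  by apply: hn; exists i; apply/negP.
by rewrite indicE memNset // (bigD1 i) //= indicE memNset ?mul0r //= in_itv.
Qed.

Lemma partial_vold a b x : partial_vol d a b x = box_vol a b.
Proof.
rewrite /partial_vol big_pred0 ?mul1r => [|i]; last by rewrite leqNgt ltn_ord.
by apply: eq_bigl => i; rewrite ltn_ord.
Qed.

Lemma measurable_partial_vol_row_upd n (j : 'I_d) a b x : j = n :> nat ->
  measurable_fun setT (fun t => (partial_vol n a b (row_upd j x t))%:E).
Proof.
move=> jn; under eq_fun do rewrite (partial_vol_row_upd _ _ _ _ jn).
by apply/measurable_EFinP; apply: measurable_funM => //; exact: measurable_indic.
Qed.

Lemma integral_partial_vol n (j : 'I_d) a b x : j = n :> nat ->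
  (forall i, a 0 i <= b 0 i) ->
  (\int[lebesgue_measure]_t (partial_vol n a b (row_upd j x t))%:E =
   (partial_vol n.+1 a b x)%:E)%E.
Proof.
move=> jn ab; under eq_integral do rewrite (partial_vol_row_upd _ _ _ _ jn) EFinM.
rewrite ge0_integralZr //; last 2 first.
- by apply/measurable_EFinP; exact: measurable_indic.
- by rewrite lee_fin partial_vol_skip_ge0.
rewrite integral_indic // setIT.
have /= -> := lebesgue_measure_itv `[a 0 j, b 0 j[.
rewrite lte_fin (partial_volS _ _ _ jn).
have [<-|abj] := eqVneq (a 0 j) (b 0 j); first by rewrite ltxx subrr mul0r mul0e.
by rewrite lt_neqAle abj ab EFinM -EFinB.
Qed.

Lemma partial_vol_le_cover a b (A B : nat -> 'rV[R]_d) :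
  (forall i, a 0 i <= b 0 i) -> (forall k i, A k 0 i <= B k 0 i) ->
  (forall x, (partial_vol 0 a b x)%:E <=
             \sum_(k <oo) (partial_vol 0 (A k) (B k) x)%:E)%E ->
  forall n, (n <= d)%N -> forall x,
  ((partial_vol n a b x)%:E <= \sum_(k <oo) (partial_vol n (A k) (B k) x)%:E)%E.
Proof.
move=> ab AB cover0; elim=> [_ //|n IHn nd x].
pose j := Ordinal nd; have jn : j = n :> nat by [].
have mpv k := measurable_partial_vol_row_upd (A k) (B k) x jn.
have pv_ge0 k y : (0 <= (partial_vol n (A k) (B k) y)%:E)%E.
  by rewrite lee_fin partial_vol_ge0.
rewrite -(integral_partial_vol x jn ab).
under eq_eseriesr => k _ do rewrite -(integral_partial_vol x jn (AB k)).
rewrite -integral_nneseries //; apply: ge0_le_integral => //.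
- by move=> t _; rewrite lee_fin partial_vol_ge0.
- exact: measurable_partial_vol_row_upd.
- by apply: ge0_emeasurable_sum => [k t _ _|k _]; [exact: pv_ge0|exact: mpv].
- by move=> t _; apply: IHn; exact: ltnW.
Qed.

Lemma box_vol_le_cover a b (A B : nat -> 'rV[R]_d) :
  (forall i, a 0 i <= b 0 i) -> (forall k i, A k 0 i <= B k 0 i) ->
  hbox a b `<=` \bigcup_k hbox (A k) (B k) ->
  ((box_vol a b)%:E <= \sum_(k <oo) (box_vol (A k) (B k))%:E)%E.
Proof.
move=> ab AB cover; rewrite -(partial_vold a b 0).
under eq_eseriesr do rewrite -(partial_vold _ _ 0).
apply: partial_vol_le_cover => // x; rewrite partial_vol0.
have [hx|hx] := pselect (hbox a b x); last first.
  by rewrite indicE memNset // nneseries_ge0 // => k _ _; rewrite lee_fin partial_vol_ge0.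
have [k _ hk] := cover x hx; rewrite indicE mem_set //.
apply: le_trans (nneseries_lim_ge k.+1 _) => //; last first.
  by move=> m _ _; rewrite lee_fin partial_vol_ge0.
rewrite big_nat_recr //= partial_vol0 indicE mem_set // leeDr // sume_ge0 // => m _.
by rewrite lee_fin partial_vol_ge0.
Qed.

End BoxVolume.

Section BoxContent.
Variables (R : realType) (d : nat).
Implicit Types (a b x : 'rV[R]_d).

Definition is_hbox (F : set 'rV[R]_d) :=
  exists a b, (forall i, a 0 i <= b 0 i) /\ F = hbox a b.

Lemma row_upd_hbox a b x (i : 'I_d) t :
  hbox a b x -> a 0 i <= t < b 0 i -> hbox a b (row_upd i x t).
Proof. by move=> hx ht k; rewrite mxE; case: eqP => [->|_] //; exact: hx. Qed.

Lemma hbox_subset_bounds a b a' b' x : hbox a b x -> hbox a b `<=` hbox a' b' ->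
  forall i, a' 0 i <= a 0 i /\ b 0 i <= b' 0 i.
Proof.
move=> hx sub i; have /andP[axi xbi] := hx i.
have abi : a 0 i < b 0 i by exact: le_lt_trans xbi.
split.
  have := sub _ (@row_upd_hbox _ _ _ i (a 0 i) hx _).
  by rewrite lexx abi => /(_ erefl i) /andP[+ _]; rewrite mxE eqxx.
rewrite leNgt; apply/negP => b'b.
pose t := Num.max (a 0 i) (b' 0 i).
have ht : a 0 i <= t < b 0 i by rewrite le_max lexx /= gt_max abi b'b.
have /andP[_] := sub _ (row_upd_hbox hx ht) i.
by rewrite mxE eqxx ltNge le_max lexx orbT.
Qed.

Lemma hbox_inj a b a' b' x : hbox a b x -> hbox a b = hbox a' b' ->
  a = a' /\ b = b'.
Proof.
move=> hx e; have hx' : hbox a' b' x by rewrite -e.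
have s1 := hbox_subset_bounds hx (_ : _ `<=` hbox a' b'); rewrite e in s1.
have s2 := hbox_subset_bounds hx' (_ : _ `<=` hbox a b); rewrite -e in s2.
by split; apply/rowP => i; apply: le_anti;
  rewrite ?(s1 _ i).1 ?(s2 _ i).1 ?(s1 _ i).2 ?(s2 _ i).2.
Qed.

Lemma box_vol_eq0 a b : (forall i, a 0 i <= b 0 i) -> hbox a b = set0 ->
  box_vol a b = 0.
Proof.
move=> ab hab0; apply/eqP; rewrite prodf_seq_eq0; apply/negPn/negP => /hasPn nz.
suff : hbox a b a by rewrite hab0.
move=> i; rewrite lexx lt_neqAle ab andbT.
by have := nz i (mem_index_enum i); rewrite subr_eq0 eq_sym.
Qed.

Lemma box_content_hbox a b : (forall i, a 0 i <= b 0 i) ->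
  box_content (hbox a b : set (Rd_all R d)) = (box_vol a b)%:E.
Proof.
move=> ab; rewrite /box_content; case: asboolP => [/(box_vol_eq0 ab) -> //|].
move=> /eqP/set0P[x hx]; apply: le_anti; apply/andP; split.
  by apply: ereal_inf_lbound; exists (a, b).
by apply: le_ereal_inf_tmp => _ [[a' b'] /= [_ /(hbox_inj hx) [<- <-]] <-].
Qed.

Lemma box_content_notbox (F : set (Rd_all R d)) : (0 < d)%N ->
  ~ is_hbox F -> box_content F = +oo%E.
Proof.
move=> d_gt0 notbox; rewrite /box_content; case: asboolP => [F0|_].
  exfalso; apply: notbox; exists 0, 0; split => [i|]; first by rewrite lexx.
  rewrite F0; apply/seteqP; split => // x /(_ (Ordinal d_gt0)).
  by rewrite !mxE => /andP[x0 x_lt0]; have := le_lt_trans x0 x_lt0; rewrite ltxx.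
apply/ereal_inf_pinfty => y [[a b] /= [ab Fab] _].
by exfalso; apply: notbox; exists a, b.
Qed.

Lemma lebesgue_outer_hbox_le a b : (forall i, a 0 i <= b 0 i) ->
  (lebesgue_outer (hbox a b : set (Rd_all R d)) <= (box_vol a b)%:E)%E.
Proof.
move=> ab; rewrite -box_content_hbox //; apply: ereal_inf_lbound.
exists (fun k => if k == 0%N then hbox a b else set0).
  by split => // x hx; exists 0%N.
rewrite (nneseries_split 0 1) => [|k _]; last exact: box_content_ge0.
rewrite add0n eseries0 ?adde0 ?big_nat1 // => -[|k] // _ _.
exact: box_content0.
Qed.

Lemma lebesgue_outer_hbox_ge a b : (0 < d)%N -> (forall i, a 0 i <= b 0 i) ->
  ((box_vol a b)%:E <= lebesgue_outer (hbox a b : set (Rd_all R d)))%E.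
Proof.
move=> d_gt0 ab; apply: le_ereal_inf_tmp => _ [F [_ cover] <-].
have [[k /(box_content_notbox d_gt0) Fk]|allbox] := pselect (exists k, ~ is_hbox (F k)).
  rewrite (eseries_pinfty _ _ Fk) ?leey // => n _.
  by rewrite gt_eqF // (lt_le_trans _ (box_content_ge0 _)).
have /choice[AB hAB] : forall k, exists AB : 'rV[R]_d * 'rV[R]_d,
    (forall i, AB.1 0 i <= AB.2 0 i) /\ F k = hbox AB.1 AB.2.
  move=> k; apply: contrapT => noAB; apply: allbox; exists k => -[a' [b' hab']].
  by apply: noAB; exists (a', b').
under eq_eseriesr => k _ do rewrite (hAB k).2 (box_content_hbox (hAB k).1).
apply: box_vol_le_cover => [//|k|x /cover[k _]]; first exact: (hAB k).1.
by rewrite (hAB k).2; exists k.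
Qed.

Lemma lebesgue_outer_hbox a b : (0 < d)%N -> (forall i, a 0 i <= b 0 i) ->
  lebesgue_outer (hbox a b : set (Rd_all R d)) = (box_vol a b)%:E.
Proof.
move=> d_gt0 ab; apply: le_anti.
by rewrite lebesgue_outer_hbox_le // lebesgue_outer_hbox_ge.
Qed.

End BoxContent.

Section HalfspaceMeasurable.
Variables (R : realType) (d : nat).
Implicit Types (a b x : 'rV[R]_d).

Definition halfspace (i : 'I_d) (c : R) : set 'rV[R]_d := [set x | x 0 i < c].

Definition clamp (a b c : R) : R := Num.min b (Num.max a c).

Lemma clamp_ge (a b c : R) : a <= b -> a <= clamp a b c.
Proof. by move=> ab; rewrite le_min ab le_max lexx. Qed.

Lemma clamp_le (a b c : R) : clamp a b c <= b.
Proof. by rewrite ge_min lexx. Qed.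

Lemma hboxI_halfspace a b i c :
  hbox a b `&` halfspace i c = hbox a (row_upd i b (clamp (a 0 i) (b 0 i) c)).
Proof.
apply/seteqP; split => x.
  move=> [hx xc] k; rewrite mxE; case: eqP => [->|_]; last exact: hx.
  by have /andP[-> xb] := hx i; rewrite lt_min xb lt_max xc orbT.
move=> hx; have := hx i; rewrite mxE eqxx lt_min lt_max => /andP[ax /andP[xb xac]].
split; last by case/orP: xac => // /(le_lt_trans ax); rewrite ltxx.
by move=> k; have := hx k; rewrite mxE; case: eqP => [->|_] //; rewrite ax xb.
Qed.

Lemma hboxI_halfspaceC a b i c :
  hbox a b `&` ~` halfspace i c = hbox (row_upd i a (clamp (a 0 i) (b 0 i) c)) b.
Proof.
apply/seteqP; split => x.
  move=> [hx /negP]; rewrite -leNgt => cx k; rewrite mxE; case: eqP => [->|_]; last exact: hx.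
  by have /andP[ax ->] := hx i; rewrite ge_min ge_max ax cx orbT.
move=> hx; have := hx i; rewrite mxE eqxx ge_min ge_max => /andP[bax xb].
have [ax cx] : a 0 i <= x 0 i /\ c <= x 0 i.
  by case/orP: bax => [/(lt_le_trans xb)|/andP[]//]; rewrite ltxx.
split; last by rewrite /halfspace /= ltNge cx.
by move=> k; have := hx k; rewrite mxE; case: eqP => [->|_] //; rewrite ax xb.
Qed.

Lemma box_vol_split a b i c :
  box_vol a (row_upd i b c) + box_vol (row_upd i a c) b = box_vol a b.
Proof.
rewrite /box_vol (bigD1 i) // [X in _ + X](bigD1 i) // [RHS](bigD1 i) //= !mxE eqxx.
have other_coords (u v u' v' : 'rV[R]_d) :
    (forall k, k != i -> u' 0 k - v' 0 k = u 0 k - v 0 k) ->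
    \prod_(k < d | k != i) (u' 0 k - v' 0 k) = \prod_(k < d | k != i) (u 0 k - v 0 k).
  by move=> e; apply: eq_bigr.
rewrite (other_coords b a) => [|k /negbTE ki]; last by rewrite mxE ki.
rewrite (other_coords b a _ (row_upd i a c)) => [|k /negbTE ki]; last by rewrite mxE ki.
by rewrite -mulrDl addrC addrA subrK.
Qed.

Lemma box_content_split (F : set (Rd_all R d)) i c : (0 < d)%N ->
  (box_content (F `&` halfspace i c) + box_content (F `&` ~` halfspace i c)
   <= box_content F)%E.
Proof.
move=> d_gt0; have [[a [b [ab ->]]]|/(box_content_notbox d_gt0) ->] := pselect (is_hbox F);
  last by rewrite leey.
pose c' := clamp (a 0 i) (b 0 i) c.
have ab1 k : a 0 k <= row_upd i b c' 0 k.
  by rewrite mxE; case: eqP => [->|]; [exact: clamp_ge|].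
have ab2 k : row_upd i a c' 0 k <= b 0 k.
  by rewrite mxE; case: eqP => [->|]; [exact: clamp_le|].
rewrite hboxI_halfspace hboxI_halfspaceC !box_content_hbox //.
by rewrite -EFinD box_vol_split.
Qed.

Lemma lebesgue_outer_split (X : set (Rd_all R d)) i c : (0 < d)%N ->
  (lebesgue_outer (X `&` halfspace i c) + lebesgue_outer (X `&` ~` halfspace i c)
   <= lebesgue_outer X)%E.
Proof.
move=> d_gt0; apply: le_ereal_inf_tmp => _ [F [_ cover] <-].
apply: (@le_trans _ _ (\sum_(k <oo) box_content (F k `&` halfspace i c) +
                       \sum_(k <oo) box_content (F k `&` ~` halfspace i c))%E).
  by apply: leeD; apply: ereal_inf_lbound; (eexists; last reflexivity);
    split => // x [/cover[k _ Fkx] xH]; exists k.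
rewrite -nneseriesD => [|k _ _|k _ _]; try exact: box_content_ge0.
apply: lee_nneseries => [k _ _|k _]; last exact: box_content_split.
by apply: adde_ge0; exact: box_content_ge0.
Qed.

Lemma halfspace_measurable i c : (0 < d)%N -> measurable (halfspace i c : set (Rd R d)).
Proof.
by move=> d_gt0; apply: le_caratheodory_measurable => X; exact: lebesgue_outer_split.
Qed.

End HalfspaceMeasurable.

Section Cubes.
Variables (R : realType) (d : nat).
Local Notation mu := (lebesgue_Rd R d).
Implicit Types (a z : 'rV[R]_d) (l : R).

Definition cube_top a l : 'rV[R]_d := \row_i (a 0 i + l).

Lemma cube_hbox a l : cube a l = hbox a (cube_top a l).
Proof. by apply/seteqP; split => x hx i; have := hx i; rewrite mxE. Qed.

Lemma box_vol_cube a l : box_vol a (cube_top a l) = cube_vol d l.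
Proof.
rewrite /box_vol; under eq_bigr do rewrite mxE addrC addKr.
by rewrite prodr_const card_ord.
Qed.

Lemma translate_cube a z l : translate_set (cube a l) z = cube (a + z) l.
Proof.
by apply/seteqP; split => x hx i; have := hx i; rewrite !mxE lerBrDr ltrBlDr addrAC.
Qed.

Lemma cube_vol_gt0 l : 0 < l -> 0 < cube_vol d l.
Proof. exact: exprn_gt0. Qed.

Lemma indic_out_cube a l (A : set (Rd R d)) : A `<=` cube a l ->
  forall x, ~ cube a l x -> \1_A x = 0 :> R.
Proof. by move=> AQ x Qx; rewrite indicE memNset // => /AQ. Qed.

Hypothesis d_gt0 : (0 < d)%N.

Lemma cube_measurable a l : measurable (cube a l : set (Rd R d)).
Proof.
have -> : cube a l =
    \bigcap_(i in [set: 'I_d]) (~` halfspace i (a 0 i) `&` halfspace i (a 0 i + l)).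
  apply/seteqP; split => x.
    by move=> hx i _; have /andP[ax xal] := hx i; rewrite /halfspace /= ltNge ax.
  by move=> hx i; have [/negP] := hx i I; rewrite /halfspace /= -leNgt => -> ->.
apply: fin_bigcap_measurable => [|i _]; first exact: finite_finset.
by apply: measurableI; [apply: measurableC|]; exact: halfspace_measurable.
Qed.

Lemma lebesgue_Rd_cube a l : 0 <= l -> mu (cube a l) = (cube_vol d l)%:E.
Proof.
move=> l_ge0; rewrite cube_hbox -(box_vol_cube a); apply: lebesgue_outer_hbox => // i.
by rewrite mxE lerDl.
Qed.

Lemma lebesgue_Rd_cube_gt0 a l : 0 < l -> (0 < mu (cube a l))%E.
Proof. by move=> l_gt0; rewrite lebesgue_Rd_cube // ?lte_fin ?cube_vol_gt0 // ltW. Qed.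

Lemma integrable_indic_cube a l (A : set (Rd R d)) : 0 <= l -> measurable A ->
  A `<=` cube a l -> mu.-integrable (cube a l) (EFin \o \1_A).
Proof.
move=> l_ge0 mA AQ; apply: measurable_bounded_integrable.
- exact: cube_measurable.
- by rewrite lebesgue_Rd_cube // ltry.
- by apply: measurable_funTS; exact: measurable_indic.
- exists 1; split => // M M_gt1 x _; apply: le_trans (ltW M_gt1).
  by rewrite indicE; case: (_ \in _); rewrite ?normr1 ?normr0.
Qed.

Lemma integral_indic_cube a l (A : set (Rd R d)) : measurable A -> A `<=` cube a l ->
  (\int[mu]_(y in cube a l) (\1_A y)%:E = mu A)%E.
Proof. by move=> mA AQ; rewrite integral_indic ?setIidl //; exact: cube_measurable. Qed.

End Cubes.

Lemma mul_le_of_forall_lt (R : realFieldType) (c y M : R) : 0 <= y -> 0 <= M ->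
  (forall lam, 0 < lam -> lam < c -> lam * y <= M) -> c * y <= M.
Proof.
move=> y_ge0 M_ge0 lamP; rewrite leNgt; apply/negP => M_lt_cy.
have y_gt0 : 0 < y.
  rewrite lt_neqAle y_ge0 andbT; apply: contraTneq M_lt_cy => <-.
  by rewrite mulr0 -leNgt.
have My_lt_c : M / y < c by rewrite ltr_pdivrMr.
have [lo hi] := midf_lt My_lt_c.
have := lamP _ (le_lt_trans (divr_ge0 M_ge0 (ltW y_gt0)) lo) hi.
by rewrite -ler_pdivlMr // leNgt lo.
Qed.

Lemma integral_abs_le_of_truncations d' (T : measurableType d') (R : realType)
    (mu : {measure set T -> \bar R}) (D : set T) (f : T -> R) (M : \bar R) :
  measurable D -> measurable_fun D f ->
  (forall n : nat, \int[mu]_(x in D) (Num.min `|f x| n%:R)%:E <= M)%E ->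
  (\int[mu]_(x in D) `|f x|%:E <= M)%E.
Proof.
move=> mD mf truncP; pose g n x := (Num.min `|f x| n%:R)%:E.
have mg n : measurable_fun D (g n).
  rewrite /g; apply/measurable_EFinP; apply: (measurable_minr _ (measurable_cst _)).
  exact: measurableT_comp (@normr_measurable R setT) mf.
have g_ge0 n x : (0 <= g n x)%E by rewrite lee_fin le_min normr_ge0 ler0n.
have g_nd x : {homo g ^~ x : m n / (m <= n)%N >-> (m <= n)%E}.
  by move=> m n mn; rewrite lee_fin le_min !ge_min lexx ler_nat mn !orbT.
rewrite (eq_integral (fun x => limn (g ^~ x))) => [|x _]; last first.
  apply/esym/lim_near_cst => //; exists (Num.truncn `|f x|).+1 => // n /= fn.
  by rewrite /g min_l // (le_trans (ltW (truncnS_gt _))) // ler_nat.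
rewrite monotone_convergence //; apply: lime_le; last exact: nearW.
by apply: ereal_nondecreasing_is_cvgn => m n mn; apply: ge0_le_integral => // x _; exact: g_nd.
Qed.

Section NondegenerateOperator.
Variables (R : realType) (d : nat).
Hypothesis d_gt0 : (0 < d)%N.
Variables (inX : set (Rd R d -> R)) (nX : (Rd R d -> R) -> R)
  (Top : (Rd R d -> R) -> Rd R d -> R) (C N : R).
Hypothesis X_qbfs : quasi_banach_function_space inX nX.
Hypothesis T_nondeg : nondegenerate_op Top C.
Hypothesis T_weak : bounded_to_weak inX nX Top N.

Local Notation mu := (lebesgue_Rd R d).
Local Notation Rd := (Rd R d).
Implicit Types (a : 'rV[R]_d) (l : R).

Lemma indic_inX_subset (A B : set Rd) : measurable A -> inX (\1_B) -> A `<=` B ->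
  inX (\1_A) /\ nX (\1_A) <= nX (\1_B).
Proof.
move=> mA B_inX AB; apply: (qbfs_ideal X_qbfs) => //.
apply: aeW => x; rewrite !indicE; have [xA|] := boolP (x \in A); last by rewrite normr0.
by rewrite mem_set //; apply: AB; rewrite -inE.
Qed.

Lemma weak_level_bound h (A : set Rd) c : inX h -> measurable A -> 0 < c ->
  (forall x, A x -> c <= `|Top h x|) -> c * nX (\1_A) <= N * nX h.
Proof.
move=> h_inX mA c_gt0 hA; have [[_ level_inX _] weakP] := T_weak h_inX.
have A_sub lam : lam < c -> A `<=` [set x | lam < `|Top h x|].
  by move=> lam_c x /hA; exact: lt_le_trans.
have level_bound lam : 0 < lam -> lam < c -> lam * nX (\1_A) <= N * nX h.
  move=> lam_gt0 lam_c.
  have [_ nA_le] := indic_inX_subset mA (level_inX _ lam_gt0) (A_sub _ lam_c).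
  apply: le_trans (ler_wpM2l (ltW lam_gt0) nA_le) _.
  by rewrite -lee_fin; apply: le_trans weakP; apply: ereal_sup_ubound; exists lam.
have [half_gt0 half_lt] := midf_lt c_gt0.
have [A_inX _] := indic_inX_subset mA (level_inX _ half_gt0) (A_sub _ half_lt).
apply: mul_le_of_forall_lt => //; first exact: qbfs_ge0 X_qbfs _ A_inX.
apply: le_trans (level_bound _ half_gt0 half_lt).
by rewrite mulr_ge0 ?(ltW half_gt0) ?(qbfs_ge0 X_qbfs).
Qed.

Lemma indic_cube_inX a l : 0 < l -> inX (\1_(cube a l)).
Proof.
move=> l_gt0; have [C_gt0 /(_ l l_gt0) [xl shiftP]] := T_nondeg.
have [F [mF FQ muF_gt0 F_inX]] := qbfs_saturation X_qbfs
  (cube_measurable d_gt0 (a - xl) l) (lebesgue_Rd_cube_gt0 d_gt0 (a - xl) l_gt0).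
have F_int := integrable_indic_cube d_gt0 (ltW l_gt0) mF FQ.
have muF_fin : mu F \is a fin_num.
  by rewrite -(integral_indic_cube d_gt0 mF FQ) integrable_fin_num //; exact: cube_measurable.
pose c := C / cube_vol d l * fine (mu F).
have c_gt0 : 0 < c.
  by rewrite !mulr_gt0 ?invr_gt0 ?cube_vol_gt0 // -lte_fin fineK.
have TF x : cube a l x -> c <= `|Top (\1_F) x|.
  move=> Qx; rewrite -lee_fin EFinM fineK // -(integral_indic_cube d_gt0 mF FQ).
  apply: shiftP => //; first exact: indic_out_cube.
  by left; rewrite translate_cube subrK.
have [half_gt0 half_lt] := midf_lt c_gt0.
have [_ level_inX _] := (T_weak F_inX).1.
apply: (indic_inX_subset (cube_measurable d_gt0 a l) (level_inX _ half_gt0) _).1.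
by move=> x Qx /=; apply: lt_le_trans (TF x Qx).
Qed.

Lemma nX_indic_cube_gt0 a l : 0 < l -> 0 < nX (\1_(cube a l)).
Proof.
move=> l_gt0; have Q_inX := indic_cube_inX a l_gt0.
rewrite lt_neqAle (qbfs_ge0 X_qbfs Q_inX) andbT; apply/eqP => /esym.
move=> /(qbfs_definite X_qbfs Q_inX) [A [mA muA0 QA]]; suff : (mu (cube a l) <= mu A)%E.
  by rewrite muA0 leNgt lebesgue_Rd_cube_gt0.
apply: le_measure; rewrite ?inE; [exact: cube_measurable|exact: mA|].
by move=> x Qx; apply: QA => /=; rewrite indicE mem_set //= => /eqP; rewrite oner_eq0.
Qed.

Definition kothe_cube_bound a l : R :=
  N ^+ 2 / C ^+ 2 * cube_vol d l / nX (\1_(cube a l)).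

Lemma kothe_cube_bound_ge0 a l : 0 < l -> 0 <= kothe_cube_bound a l.
Proof.
move=> l_gt0; rewrite divr_ge0 ?(ltW (nX_indic_cube_gt0 a l_gt0)) //.
by rewrite mulr_ge0 ?(ltW (cube_vol_gt0 d l_gt0)) // divr_ge0 // sqr_ge0.
Qed.

Lemma nondegenerate_cube_pair a l : 0 < l -> exists xl : 'rV[R]_d,
  (forall g, (forall x, 0 <= g x) -> (forall x, ~ cube a l x -> g x = 0) ->
    mu.-integrable (cube a l) (EFin \o g) -> forall x, cube (a + xl) l x ->
    C / cube_vol d l * fine (\int[mu]_(y in cube a l) (g y)%:E) <= `|Top g x|) /\
  (forall x, cube a l x -> C <= `|Top (\1_(cube (a + xl) l)) x|).
Proof.
move=> l_gt0; have [C_gt0 /(_ l l_gt0) [xl shiftP]] := T_nondeg.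
exists xl; split=> [g g_ge0 g_out g_int x Q'x|x Qx].
  rewrite -lee_fin EFinM fineK ?integrable_fin_num //; last exact: cube_measurable.
  by apply: shiftP => //; left; rewrite translate_cube.
set Q' := cube (a + xl) l; have mQ' : measurable Q' := cube_measurable d_gt0 _ _.
have Q'x : translate_set Q' (- xl) x by rewrite translate_cube addrK.
have Q'_ge0 y : 0 <= \1_Q' y :> R by [].
have := shiftP _ _ Q'_ge0 (indic_out_cube (@subset_refl _ Q'))
  (integrable_indic_cube d_gt0 (ltW l_gt0) mQ' (@subset_refl _ Q')) x (or_intror Q'x).
rewrite integral_indic_cube // lebesgue_Rd_cube ?(ltW l_gt0) // -EFinM lee_fin.
by rewrite divfK // gt_eqF // cube_vol_gt0.
Qed.

Lemma integral_cube_le a l g : 0 < l -> inX g -> (forall x, 0 <= g x) ->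
  (forall x, ~ cube a l x -> g x = 0) -> mu.-integrable (cube a l) (EFin \o g) ->
  (\int[mu]_(y in cube a l) (g y)%:E <= (kothe_cube_bound a l * nX g)%:E)%E.
Proof.
move=> l_gt0 g_inX g_ge0 g_out g_int; have [C_gt0 _] := T_nondeg.
have [xl [T_g T_Q']] := nondegenerate_cube_pair a l_gt0.
have vol_gt0 := cube_vol_gt0 d l_gt0.
have nQ_gt0 := nX_indic_cube_gt0 a l_gt0.
rewrite -(fineK (integrable_fin_num (cube_measurable d_gt0 a l) g_int)) lee_fin.
move: T_g => /(_ g g_ge0 g_out g_int); set r := fine _ => T_g.
have [r_le0|r_gt0] := lerP r 0.
  by rewrite (le_trans r_le0) // mulr_ge0 ?kothe_cube_bound_ge0 ?(qbfs_ge0 X_qbfs).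
have c_gt0 : 0 < C / cube_vol d l * r by rewrite !mulr_gt0 ?invr_gt0.
have nQ'_bound := weak_level_bound g_inX (cube_measurable d_gt0 _ _) c_gt0 T_g.
have nQ_bound := weak_level_bound (indic_cube_inX (a + xl) l_gt0)
  (cube_measurable d_gt0 a l) C_gt0 T_Q'.
have N_gt0 : 0 < N.
  have := lt_le_trans (mulr_gt0 C_gt0 nQ_gt0) nQ_bound.
  by rewrite pmulr_lgt0 // nX_indic_cube_gt0.
have key : C / cube_vol d l * r * (C * nX (\1_(cube a l))) <= N * (N * nX g).
  apply: le_trans (ler_wpM2l (ltW c_gt0) nQ_bound) _.
  by rewrite mulrCA ler_wpM2l // ltW.
pose s := cube_vol d l / (C ^+ 2 * nX (\1_(cube a l))).
have -> : r = C / cube_vol d l * r * (C * nX (\1_(cube a l))) * s.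
  by rewrite /s; field; rewrite !gt_eqF.
have -> : kothe_cube_bound a l * nX g = N * (N * nX g) * s.
  by rewrite /kothe_cube_bound /s; field; rewrite !gt_eqF.
by rewrite ler_wpM2r // divr_ge0 ?mulr_ge0 ?sqr_ge0 ?ltW.
Qed.

Lemma kothe_norm_indic_cube_le a l : 0 < l ->
  (kothe_norm inX nX (\1_(cube a l)) <= (kothe_cube_bound a l)%:E)%E.
Proof.
move=> l_gt0; apply: ge_ereal_sup => _ [f [f_inX nf1] <-].
have mQ := cube_measurable d_gt0 a l.
have mf := qbfs_measurable X_qbfs f_inX.
have -> : (\int[mu]_x `|f x * \1_(cube a l) x|%:E =
           \int[mu]_(x in cube a l) `|f x|%:E)%E.
  rewrite [RHS]integral_mkcond; apply: eq_integral => x _ /=; rewrite /patch indicE.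
  by case: ifP; rewrite ?mulr1 ?mulr0 ?normr0.
rewrite -[kothe_cube_bound a l]mulr1 -nf1.
apply: integral_abs_le_of_truncations => // [|n]; first exact: measurable_funTS.
pose g x := Num.min `|f x| n%:R * \1_(cube a l) x.
have mg : measurable_fun setT g.
  apply: measurable_funM; last exact: measurable_indic.
  exact: measurable_minr (measurableT_comp (@normr_measurable R setT) mf) (measurable_cst _).
have g_ge0 x : 0 <= g x by rewrite mulr_ge0 // le_min normr_ge0 ler0n.
have g_le x : g x <= Num.min `|f x| n%:R.
  by rewrite ler_piMr // ?le_min ?normr_ge0 // indicE; case: (_ \in _).
have [g_inX ng_le] : inX g /\ nX g <= nX f.
  apply: (qbfs_ideal X_qbfs) => //; apply: aeW => x.
  by rewrite ger0_norm // (le_trans (g_le x)) // ge_min lexx.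
have -> : (\int[mu]_(x in cube a l) (Num.min `|f x| n%:R)%:E =
           \int[mu]_(x in cube a l) (g x)%:E)%E.
  by apply: eq_integral => x /[!inE] Qx; rewrite /g indicE mem_set ?mulr1.
apply: le_trans (integral_cube_le l_gt0 g_inX g_ge0 _ _) _.
- by move=> x Qx; rewrite /g indicE memNset ?mulr0.
- apply: measurable_bounded_integrable => //.
  + by rewrite lebesgue_Rd_cube ?ltry // ltW.
  + exact: measurable_funTS.
  + exists n%:R; split => // M nM x _ /=; rewrite ger0_norm //.
    by apply: le_trans (ltW nM); apply: le_trans (g_le x) _; rewrite ge_min lexx orbT.
- by rewrite lee_fin ler_wpM2l ?kothe_cube_bound_ge0.
Qed.

End NondegenerateOperator.

Theorem proposition3p4 (R : realType) (d : nat) (hd : (0 < d)%N)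
    (inX : set (Rd R d -> R)) (nX : (Rd R d -> R) -> R)
    (Top : (Rd R d -> R) -> Rd R d -> R) (C N : R) :
  quasi_banach_function_space inX nX ->
  fatou_property inX nX ->
  sublinear_on inX Top ->
  nondegenerate_op Top C ->
  bounded_to_weak inX nX Top N ->
  in_A inX nX /\ (A_const inX nX <= (C ^-2 * N ^+ 2)%:E)%E.
Proof.
move=> X_qbfs _ _ T_nondeg T_weak; have [C_gt0 _] := T_nondeg.
have kotheP a l := kothe_norm_indic_cube_le hd X_qbfs T_nondeg T_weak a (l := l).
split=> [a l l_gt0|].
  have Q_inX := indic_cube_inX hd X_qbfs T_nondeg T_weak a l_gt0.
  split=> //; split; first exact: qbfs_measurable X_qbfs _ Q_inX.
  by apply: le_lt_trans (kotheP a l l_gt0) _; rewrite ltry.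
apply: ge_ereal_sup => _ [[a l] /= l_gt0 <-].
have vol_gt0 := cube_vol_gt0 d l_gt0.
have nQ_gt0 := nX_indic_cube_gt0 hd X_qbfs T_nondeg T_weak a l_gt0.
apply: le_trans (lee_wpmul2l _ (kotheP a l l_gt0)) _.
  by rewrite lee_fin mulr_ge0 ?invr_ge0 ?ltW.
rewrite -EFinM lee_fin le_eqVlt; apply/predU1P; left.
by rewrite /kothe_cube_bound; field; rewrite !gt_eqF.
Qed.
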